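(* Consider the integer quadratic program: minimize $x^TQx$ subject to $Ax\le b$, $Cx=d$, $x\in\mathbb{Z}^n$. For any deep optimal solution $x^\star$ of this program and any $y_i\in Y$ such that $y_i^TQ$ is linearly dependent on the rows of $C$ (i.e., lies in their linear span), the vectors $x^\star+y_i$ and $x^\star-y_i$ are also optimal solutions.
   Context: Setting: $Q$ is an $n\times n$ integer symmetric matrix, $A$ an $m\times n$ integer matrix, $b\in\mathbb{Z}^m$, $C$ an integer matrix with $n$ columns and linearly independent rows, and $d$ an integer vector. $\Delta$ is the maximum absolute value of the determinant of a square submatrix of $C$. $y_1,\dots,y_r$ is a basis of the nullspace of $C$ consisting of integer vectors with $|y_i|_\infty\le\Delta^2$, and $Y$ is the set of these vectors. A feasible solution is an $x\in\mathbb{Z}^n$ with $Ax\le b$ and $Cx=d$; an optimal solution is a feasible solution minimizing $x^TQx$ over all feasible solutions. A feasible solution $x$ is deep if $x+y_i$ and $x-y_i$ are feasible for all $y_i\in Y$. *)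

From mathcomp Require Import all_boot all_order all_algebra.
Set Implicit Arguments. Unset Strict Implicit. Unset Printing Implicit Defensive.
Import Order.TTheory GRing.Theory Num.Theory.
Local Open Scope ring_scope.

Definition ratmx (p q : nat) (M : 'M[int]_(p, q)) : 'M[rat]_(p, q) :=
  map_mx (fun z : int => z%:~R) M.

(* Delta: maximum absolute value of the determinant of a square submatrix of C
   (rows f, columns g; repeated or permuted indices only give 0 or a sign change,
    so this is the max over genuine square submatrices, including the empty one). *)
Definition maxsubdet (k n : nat) (C : 'M[int]_(k, n)) : nat :=
  \max_(p < (minn k n).+1)
    \max_(f : {ffun 'I_p -> 'I_k})
      \max_(g : {ffun 'I_p -> 'I_n}) `|\det (mxsub f g C)|%N.

Definition feasible (m n k : nat) (A : 'M[int]_(m, n)) (b : 'cV[int]_m)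
    (C : 'M[int]_(k, n)) (d : 'cV[int]_k) (x : 'cV[int]_n) : Prop :=
  (forall i, (A *m x) i 0 <= b i 0) /\ C *m x = d.

Definition qobj (n : nat) (Q : 'M[int]_n) (x : 'cV[int]_n) : int :=
  (x^T *m Q *m x) 0 0.

Definition optimal (m n k : nat) (Q : 'M[int]_n) (A : 'M[int]_(m, n)) (b : 'cV[int]_m)
    (C : 'M[int]_(k, n)) (d : 'cV[int]_k) (x : 'cV[int]_n) : Prop :=
  feasible A b C d x /\
  forall z, feasible A b C d z -> qobj Q x <= qobj Q z.

Definition deep (m n k r : nat) (A : 'M[int]_(m, n)) (b : 'cV[int]_m)
    (C : 'M[int]_(k, n)) (d : 'cV[int]_k) (Y : 'M[int]_(n, r)) (x : 'cV[int]_n) : Prop :=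
  feasible A b C d x /\
  forall i : 'I_r, feasible A b C d (x + col i Y) /\ feasible A b C d (x - col i Y).

Definition nullspace_basis (n k r : nat) (C : 'M[int]_(k, n)) (Y : 'M[int]_(n, r)) : Prop :=
  row_free (ratmx Y)^T /\
  forall v : 'rV[rat]_n, (ratmx C *m v^T == 0) = (v <= (ratmx Y)^T)%MS.

From mathcomp Require Import all_boot all_order all_algebra.
From mathcomp Require Import ring.
Set Implicit Arguments. Unset Strict Implicit. Unset Printing Implicit Defensive.
Import Order.TTheory GRing.Theory Num.Theory.
Local Open Scope ring_scope.

(* If [y^T Q] is a combination [w C] of the rows of [C] and [C y = 0], then
   [y^T Q y = w C y = 0], so [q(x +- y) = q(x) +- 2 y^T Q x].  Deepness makes
   both [x + y] and [x - y] feasible, so optimality of [x] forces the linear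
   term to vanish, and [x +- y] reach the optimal value.  Neither the bound on
   the entries of [Y] nor the independence of the rows of [C] is needed. *)

Section QuadraticObjective.

Variables (n : nat) (Q : 'M[int]_n).
Hypothesis Qsym : Q^T = Q.

Lemma qobjD (x y : 'cV[int]_n) :
  qobj Q (x + y) = qobj Q x + 2 * (y^T *m Q *m x) 0 0 + qobj Q y.
Proof.
rewrite /qobj [(x + y)^T]linearD /= !mulmxDl !mulmxDr.
have -> : x^T *m Q *m y = (y^T *m Q *m x)^T.
  by rewrite !trmx_mul trmxK Qsym mulmxA.
rewrite !mxE; ring.
Qed.

Lemma qobjN (y : 'cV[int]_n) : qobj Q (- y) = qobj Q y.
Proof. by rewrite /qobj [(- y)^T]linearN /= mulNmx mulmxN mulNmx opprK. Qed.

Lemma qobjB (x y : 'cV[int]_n) :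
  qobj Q (x - y) = qobj Q x - 2 * (y^T *m Q *m x) 0 0 + qobj Q y.
Proof. by rewrite qobjD qobjN linearN /= !mulNmx mxE mulrN. Qed.

End QuadraticObjective.

Lemma qobj_eq0_of_row_space n k (Q : 'M[int]_n) (C : 'M[int]_(k, n))
    (y : 'cV[int]_n) :
  (ratmx (y^T *m Q) <= ratmx C)%MS -> ratmx C *m ratmx y = 0 ->
  qobj Q y = 0.
Proof.
case/submxP=> w yQ Cy; apply/eqP; rewrite -(intr_eq0 rat).
have -> : (qobj Q y)%:~R = ratmx (y^T *m Q *m y) 0 0 :> rat by rewrite mxE.
by rewrite /ratmx map_mxM -/(ratmx _) -/(ratmx y) yQ -mulmxA Cy mulmx0 mxE.
Qed.

Lemma nullspace_basis_col n k r (C : 'M[int]_(k, n)) (Y : 'M[int]_(n, r))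
    (i : 'I_r) :
  nullspace_basis C Y -> ratmx C *m ratmx (col i Y) = 0.
Proof.
case=> _ CY; apply/eqP; rewrite -[ratmx (col i Y)]trmxK CY.
by rewrite /ratmx map_col tr_col row_sub.
Qed.

Lemma optimal_eq_qobj m n k (Q : 'M[int]_n) (A : 'M[int]_(m, n))
    (b : 'cV[int]_m) (C : 'M[int]_(k, n)) (d : 'cV[int]_k) (x z : 'cV[int]_n) :
  optimal Q A b C d x -> feasible A b C d z -> qobj Q z = qobj Q x ->
  optimal Q A b C d z.
Proof. by move=> [_ opt] fz qz; split=> // w fw; rewrite qz; apply: opt. Qed.

Theorem lemma4 (m n k r : nat) (Q : 'M[int]_n) (A : 'M[int]_(m, n)) (b : 'cV[int]_m)
    (C : 'M[int]_(k, n)) (d : 'cV[int]_k) (Y : 'M[int]_(n, r)) :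
  Q^T = Q ->
  row_free (ratmx C) ->
  nullspace_basis C Y ->
  (forall (i : 'I_n) (j : 'I_r), (`|Y i j| <= (maxsubdet C ^ 2)%N)%N) ->
  forall xs : 'cV[int]_n,
  optimal Q A b C d xs -> deep A b C d Y xs ->
  forall i : 'I_r,
  ((ratmx ((col i Y)^T *m Q)) <= ratmx C)%MS ->
  optimal Q A b C d (xs + col i Y) /\ optimal Q A b C d (xs - col i Y).
Proof.
move=> Qsym _ basisY _ xs xs_opt [_ xs_deep] i yQC.
have qy0 : qobj Q (col i Y) = 0.
  exact: qobj_eq0_of_row_space yQC (nullspace_basis_col i basisY).
have [feas_plus feas_minus] := xs_deep i.
have le_plus := xs_opt.2 _ feas_plus; have le_minus := xs_opt.2 _ feas_minus.
rewrite qobjD // qobjB // qy0 !addr0 !lerDl oppr_ge0 in le_plus le_minus.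
rewrite pmulr_rge0 // in le_plus; rewrite pmulr_rle0 // in le_minus.
have lin0 : ((col i Y)^T *m Q *m xs) 0 0 = 0 by apply/le_anti/andP.
split; apply: optimal_eq_qobj xs_opt _ _ => //.
- by rewrite qobjD // qy0 lin0 mulr0 !addr0.
- by rewrite qobjB // qy0 lin0 mulr0 subr0 addr0.
Qed.
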